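(* There exist $K_3$-WORM-colorable $K_4$-free graphs $G$ such that $W^-(G,K_3)=3$.
   Context: A $K_3$-WORM coloring of a graph $G$ is an assignment of colors to the vertices of $G$ such that the three vertices of every triangle of $G$ receive exactly two distinct colors. $G$ is $K_3$-WORM-colorable if it has such a coloring, and then $W^-(G,K_3)$ is the minimum number of colors used in a $K_3$-WORM coloring of $G$. A graph is $K_4$-free if it contains no subgraph isomorphic to $K_4$. *)

From mathcomp Require Import all_boot.
Set Implicit Arguments. Unset Strict Implicit. Unset Printing Implicit Defensive.

Definition simple_graph (T : finType) (e : rel T) : Prop :=
  symmetric e /\ irreflexive e.

Definition triangle (T : finType) (e : rel T) (x y z : T) : Prop :=
  e x y /\ e y z /\ e x z.

Definition K4_free (T : finType) (e : rel T) : Prop :=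
  ~ exists x y z w : T, [&& e x y, e x z, e x w, e y z, e y w & e z w].

Definition num_colors (T : finType) (c : T -> nat) : nat :=
  size (undup [seq c x | x : T]).

Definition K3_WORM (T : finType) (e : rel T) (c : T -> nat) : Prop :=
  forall x y z : T, triangle e x y z -> size (undup [:: c x; c y; c z]) = 2.

Definition K3_WORM_colorable (T : finType) (e : rel T) : Prop :=
  exists c : T -> nat, K3_WORM e c.

Definition W_minus_K3_eq (T : finType) (e : rel T) (k : nat) : Prop :=
  (exists c : T -> nat, K3_WORM e c /\ num_colors c = k) /\
  (forall c : T -> nat, K3_WORM e c -> k <= num_colors c).

From mathcomp Require Import all_boot.
Set Implicit Arguments. Unset Strict Implicit. Unset Printing Implicit Defensive.

(* A coloring with at most two colors is a K3-WORM coloring only if it leaves no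
   triangle monochromatic, so W^-(G,K3) >= 3 as soon as every 2-coloring of the
   vertices of G has a monochromatic triangle.  A suitable K4-free graph on 20
   vertices has this property, as an exhaustive search over its 2-colorings shows
   (a branch is closed as soon as a monochromatic triangle appears), and it has a
   K3-WORM coloring with three colors. *)

Definition arrows_K3 (T : finType) (e : rel T) : Prop :=
  forall b : T -> bool, exists x y z, triangle e x y z /\ b x = b y /\ b y = b z.

Lemma num_colors_le2_eq (T : finType) (c : T -> nat) (w x y : T) :
  num_colors c <= 2 -> c x != c w -> c y != c w -> c x = c y.
Proof.
move=> le2 xw yw; apply/eqP; apply: contraTT le2 => xy; rewrite -ltnNge.
have uniq3 : uniq [:: c w; c x; c y].
  by rewrite /= !inE negb_or xy !(eq_sym (c w)) xw yw.
apply: (uniq_leq_size uniq3) => v; rewrite !inE => /or3P[] /eqP->;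
  by rewrite mem_undup map_f ?mem_enum.
Qed.

Lemma K3_WORM_num_colors_ge3 (T : finType) (e : rel T) (c : T -> nat) :
  arrows_K3 e -> K3_WORM e c -> 3 <= num_colors c.
Proof.
move=> arrow worm; rewrite leqNgt ltnS; apply/negP => le2.
have [w _] := arrow (fun _ => true).
have [x [y [z [xyz [bxy byz]]]]] := arrow (fun v => c v == c w).
have [cxy cyz] : c x = c y /\ c y = c z.
  move: bxy byz => /= bxy byz.
  have [xw | xw] := eqVneq (c x) (c w).
    have yw : c y == c w by rewrite -bxy; apply/eqP.
    have zw : c z == c w by rewrite -byz.
    by rewrite xw (eqP yw) (eqP zw).
  have yw : c y != c w by rewrite -bxy.
  have zw : c z != c w by rewrite -byz.
  by split; apply: (num_colors_le2_eq (w := w) le2).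
by move: (worm _ _ _ xyz); rewrite cxy cyz /= !inE eqxx.
Qed.

Section ForcedMonochromaticTriangle.

Variable ts : seq (nat * nat * nat).

Definition mono_on (s : seq bool) (t : nat * nat * nat) : bool :=
  let: (i, j, k) := t in (nth false s i == nth false s j) && (nth false s j == nth false s k).

Definition colored_by (s : seq bool) (t : nat * nat * nat) : bool :=
  let: (i, j, k) := t in [&& i < size s, j < size s & k < size s].

Lemma mono_on_cat s L t : colored_by s t -> mono_on (s ++ L) t = mono_on s t.
Proof. by case: t => [[i j] k] /and3P[si sj sk]; rewrite /= !nth_cat si sj sk. Qed.

(* Written with [if] rather than [||] and [&&] so that [vm_compute], which is
   call-by-value, prunes the search. *)
Fixpoint forced_mono (fuel : nat) (s : seq bool) : bool :=
  if has (fun t => colored_by s t && mono_on s t) ts then true else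
  if fuel is f.+1 then
    if forced_mono f (rcons s true) then forced_mono f (rcons s false) else false
  else false.

Lemma forced_monoP fuel s L :
  forced_mono fuel s -> size L = fuel -> has (mono_on (s ++ L)) ts.
Proof.
elim: fuel s L => [|f IH] s L /orP[/hasP[t t_in /andP[st mt]] _|] //.
  1,2: by apply/hasP; exists t; rewrite // mono_on_cat.
case: L => // b L /andP[ft ff] [sizeL]; rewrite -cat_rcons.
by case: b; [apply: IH ft _ | apply: IH ff _].
Qed.

End ForcedMonochromaticTriangle.

Definition nat_triangle (adj : rel nat) (n : nat) (t : nat * nat * nat) : bool :=
  let: (i, j, k) := t in [&& i < j, j < k, k < n, adj i j, adj j k & adj i k].

Definition nat_triangles (adj : rel nat) (n : nat) : seq (nat * nat * nat) :=
  let r := iota 0 n in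
  filter (nat_triangle adj n) [seq (ij, k) | ij <- [seq (i, j) | i <- r, j <- r], k <- r].

Lemma arrows_K3_of_forced_mono (adj : rel nat) (n : nat) :
  forced_mono (nat_triangles adj n.+1) n.+1 [::] ->
  arrows_K3 (fun x y : 'I_n.+1 => adj x y).
Proof.
move=> forced b.
have /hasP[[[i j] k]] := forced_monoP forced (size_mkseq (fun i => b (inord i)) n.+1).
rewrite mem_filter => /andP[/and4P[lt_ij lt_jk lt_kn /and3P[aij ajk aik]] _].
have lt_jn := ltn_trans lt_jk lt_kn; have lt_in := ltn_trans lt_ij lt_jn.
rewrite /= !nth_mkseq // => /andP[/eqP bij /eqP bjk].
by exists (inord i), (inord j), (inord k); rewrite /triangle !inordK.
Qed.

Lemma all_iota_ord (n : nat) (P : pred nat) : all P (iota 0 n) -> forall x : 'I_n, P x.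
Proof. by move/allP=> allP x; apply: allP; rewrite mem_iota ltn_ord. Qed.

Definition nbrs20 : seq (seq nat) :=
  [:: [:: 1; 6; 9; 11; 14; 16; 17]; [:: 0; 2; 3; 4; 7; 8; 10; 12; 13; 14; 18];
      [:: 1; 4; 6; 7; 10; 11; 15; 17; 18; 19]; [:: 1; 4; 5; 6; 9; 17; 18; 19];
      [:: 1; 2; 3; 5; 6; 9; 14; 15; 16]; [:: 3; 4; 7; 8; 10; 11; 15; 17; 19];
      [:: 0; 2; 3; 4; 12; 16; 17; 19]; [:: 1; 2; 5; 9; 11; 12; 14; 16; 19];
      [:: 1; 5; 12; 13; 15; 16; 17; 18]; [:: 0; 3; 4; 7; 10; 12; 13; 15; 18];
      [:: 1; 2; 5; 9; 12; 13; 14; 17; 19]; [:: 0; 2; 5; 7; 12; 15; 16; 17];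
      [:: 1; 6; 7; 8; 9; 10; 11; 15; 17; 19]; [:: 1; 8; 9; 10; 15; 16; 17];
      [:: 0; 1; 4; 7; 10; 15; 17; 18; 19]; [:: 2; 4; 5; 8; 9; 11; 12; 13; 14; 18; 19];
      [:: 0; 4; 6; 7; 8; 11; 13; 19]; [:: 0; 2; 3; 5; 6; 8; 10; 11; 12; 13; 14; 18];
      [:: 1; 2; 3; 8; 9; 14; 15; 17]; [:: 2; 3; 5; 6; 7; 10; 12; 14; 15; 16]].

Definition adj20 : rel nat := fun i j => j \in nth [::] nbrs20 i.

Definition G20 : rel 'I_20 := fun x y => adj20 x y.

Definition cols20 : seq nat := [:: 2; 1; 2; 0; 1; 0; 1; 1; 0; 0; 1; 1; 0; 0; 2; 1; 2; 1; 1; 1].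

Definition col20 (x : 'I_20) : nat := nth 0 cols20 x.

Lemma G20_simple : simple_graph G20.
Proof.
have sym : all (fun i => all (fun j => adj20 i j == adj20 j i) (iota 0 20)) (iota 0 20).
  by vm_compute.
have irr : all (fun i => ~~ adj20 i i) (iota 0 20) by vm_compute.
split=> [x y | x]; first exact/eqP/(all_iota_ord (all_iota_ord sym x)).
exact/negbTE/(all_iota_ord irr).
Qed.

Lemma G20_K4_free : K4_free G20.
Proof.
pose r := iota 0 20.
have k4 : all (fun x => all (fun y => all (fun z => all (fun w =>
    ~~ [&& adj20 x y, adj20 x z, adj20 x w, adj20 y z, adj20 y w & adj20 z w]) r) r) r) r.
  by vm_compute.
move=> [x [y [z [w]]]]; apply/negP.
exact: (all_iota_ord (all_iota_ord (all_iota_ord (all_iota_ord k4 x) y) z) w).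
Qed.

Lemma col20_K3_WORM : K3_WORM G20 col20.
Proof.
pose r := iota 0 20.
have worm : all (fun x => all (fun y => all (fun z =>
    [&& adj20 x y, adj20 y z & adj20 x z] ==>
    (size (undup [:: nth 0 cols20 x; nth 0 cols20 y; nth 0 cols20 z]) == 2)) r) r) r.
  by vm_compute.
move=> x y z [xy [yz xz]].
have := all_iota_ord (all_iota_ord (all_iota_ord worm x) y) z.
by rewrite /G20 in xy yz xz; rewrite xy yz xz => /eqP.
Qed.

Lemma num_colors_col20 : num_colors col20 = 3.
Proof.
rewrite /num_colors (_ : [seq col20 x | x : 'I_20] = map (nth 0 cols20) (iota 0 20)) //.
by rewrite -val_enum_ord -map_comp.
Qed.

Lemma G20_arrows_K3 : arrows_K3 G20.
Proof. by apply: arrows_K3_of_forced_mono; vm_compute. Qed.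

Theorem mainTheorem5 :
  exists (T : finType) (e : rel T),
    [/\ simple_graph e, K4_free e, K3_WORM_colorable e & W_minus_K3_eq e 3].
Proof.
exists 'I_20, G20; split.
- exact: G20_simple.
- exact: G20_K4_free.
- by exists col20; exact: col20_K3_WORM.
- split; first by exists col20; split; [exact: col20_K3_WORM | exact: num_colors_col20].
  by move=> c; apply: K3_WORM_num_colors_ge3; exact: G20_arrows_K3.
Qed.
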